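(* If $f:\mathbb{N}^d\to\mathbb{N}$ is obliviously-computable, then for every $i\in\{1,\ldots,d\}$ and $j\in\mathbb{N}$ the fixed-input restriction $f_{[\vec{x}(i)\to j]}:\mathbb{N}^d\to\mathbb{N}$ is obliviously-computable.
   Context: A chemical reaction network (CRN) is a pair $(\mathcal{S},\mathcal{R})$ of a finite set of species and a finite set of reactions $(\vec{R},\vec{P})\in\mathbb{N}^{\mathcal{S}}\times\mathbb{N}^{\mathcal{S}}$. A configuration is $\vec{C}\in\mathbb{N}^{\mathcal{S}}$; a reaction is applicable if $\vec{R}\le\vec{C}$ and yields $\vec{C}-\vec{R}+\vec{P}$; reachability is via finite sequences of applicable reactions. To compute $f:\mathbb{N}^d\to\mathbb{N}$ the CRN has input species $X_1,\ldots,X_d$, output species $Y$, leader species $L$; the initial configuration $\vec{I}_{\vec{x}}$ has $\vec{x}(i)$ copies of $X_i$, one $L$, nothing else. $\vec{C}$ is stable if all configurations reachable from it have the same count of $Y$. The CRN stably computes $f$ if for every $\vec{x}$ and every $\vec{C}$ reachable from $\vec{I}_{\vec{x}}$ some stable $\vec{O}$ reachable from $\vec{C}$ has $\vec{O}(Y)=f(\vec{x})$. The CRN is output-oblivious if $Y$ is never a reactant; $f$ is obliviously-computable if stably computed by an output-oblivious CRN. The fixed-input restriction is $f_{[\vec{x}(i)\to j]}(\vec{x})=f(\vec{x}(1),\ldots,\vec{x}(i-1),j,\vec{x}(i+1),\ldots,\vec{x}(d))$ for all $\vec{x}\in\mathbb{N}^d$. *)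

From mathcomp Require Import all_boot.
Set Implicit Arguments. Unset Strict Implicit. Unset Printing Implicit Defensive.

Definition config (S : finType) := {ffun S -> nat}.

(* A reaction is a pair (R, P) of reactant / product vectors. *)
Definition reaction (S : finType) := (config S * config S)%type.

Definition le_config (S : finType) (A B : config S) : Prop := forall s, A s <= B s.

Definition applicable (S : finType) (r : reaction S) (C : config S) : Prop :=
  le_config r.1 C.

Definition apply_reaction (S : finType) (r : reaction S) (C : config S) : config S :=
  [ffun s => C s - r.1 s + r.2 s].

Definition step (S : finType) (rs : seq (reaction S)) (C D : config S) : Prop :=
  exists r, r \in rs /\ applicable r C /\ D = apply_reaction r C.

Inductive reachable (S : finType) (rs : seq (reaction S)) : config S -> config S -> Prop :=
| reach_refl C : reachable rs C C
| reach_step C D E : step rs C D -> reachable rs D E -> reachable rs C E.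

Record CRN (d : nat) := {
  species : finType;
  reactions : seq (reaction species);
  inX : 'I_d -> species;
  outY : species;
  leaderL : species;
  inX_inj : injective inX;
  Y_notin_X : forall k, inX k <> outY;
  L_notin_X : forall k, inX k <> leaderL;
  Y_neq_L : outY <> leaderL
}.

Definition init_config (d : nat) (N : CRN d) (x : 'I_d -> nat) : config (species N) :=
  [ffun s => \sum_(k < d | inX N k == s) x k + (s == leaderL N)].

Definition stable (d : nat) (N : CRN d) (C : config (species N)) : Prop :=
  forall D, reachable (reactions N) C D -> D (outY N) = C (outY N).

Definition stably_computes (d : nat) (N : CRN d) (f : ('I_d -> nat) -> nat) : Prop :=
  forall (x : 'I_d -> nat) (C : config (species N)),
    reachable (reactions N) (init_config N x) C ->
    exists O : config (species N),
      reachable (reactions N) C O /\ stable O /\ O (outY N) = f x.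

Definition output_oblivious (d : nat) (N : CRN d) : Prop :=
  forall r, r \in reactions N -> r.1 (outY N) = 0.

Definition obliviously_computable (d : nat) (f : ('I_d -> nat) -> nat) : Prop :=
  exists N : CRN d, output_oblivious N /\ stably_computes N f.

Definition fix_input (d : nat) (f : ('I_d -> nat) -> nat) (i : 'I_d) (j : nat)
  : ('I_d -> nat) -> nat :=
  fun x => f (fun k => if k == i then j else x k).

From mathcomp Require Import all_boot.
Set Implicit Arguments. Unset Strict Implicit. Unset Printing Implicit Defensive.

(* Give the new CRN fresh input species X'_k and a fresh leader L', each of
   which unfolds in one reaction into its share of the old initial
   configuration with input i fixed to j: X'_k into X_k for k <> i, X'_i into
   nothing, L' into L and j copies of X_i; all old reactions are kept.
   Counting every fresh species as what it unfolds into maps each run of the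
   new CRN onto a run of the old one from the fixed-input initial
   configuration.  Fresh species can always be unfolded completely, which
   lands in a copy of an old configuration; from there the old CRN reaches a
   stable correct output, and stability transfers back along the projection
   because Y is untouched by unfolding. *)

Lemma big_option (R : Type) (idx : R) (op : R -> R -> R) (I : finType)
    (F : option I -> R) :
  \big[op/idx]_(u : option I) F u = op (F None) (\big[op/idx]_(k : I) F (Some k)).
Proof.
by rewrite ![index_enum _]unlock [@Finite.enum in LHS]unlock /= big_cons big_map.
Qed.

Lemma reachable_trans (S : finType) (rs : seq (reaction S)) A B C :
  reachable rs A B -> reachable rs B C -> reachable rs A C.
Proof. by elim=> // X Y Z XY _ IH /IH; apply: reach_step. Qed.

Lemma step_reachable (S : finType) (rs : seq (reaction S)) C D :
  step rs C D -> reachable rs C D.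
Proof. by move=> CD; apply: reach_step CD (reach_refl _ _). Qed.

Lemma reachable_homo (S T : finType) (rs : seq (reaction S)) (rt : seq (reaction T))
    (h : config S -> config T) :
    (forall C D, step rs C D -> reachable rt (h C) (h D)) ->
  forall C D, reachable rs C D -> reachable rt (h C) (h D).
Proof.
move=> h_step C D; elim=> [X|X Y Z XY _]; first exact: reach_refl.
exact: reachable_trans (h_step _ _ XY).
Qed.

Section Unfolding.
Variables (S T : finType) (rs : seq (reaction S)) (w : T -> config S).

Definition lift_config (A : config S) : config (S + T)%type :=
  [ffun x => if x is inl s then A s else 0].

Definition lift_reaction (r : reaction S) : reaction (S + T)%type :=
  (lift_config r.1, lift_config r.2).

Definition unfold_reaction (u : T) : reaction (S + T)%type :=
  ([ffun x => x == inr u : nat], lift_config (w u)).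

Definition unfold_reactions : seq (reaction (S + T)%type) :=
  map lift_reaction rs ++ map unfold_reaction (enum T).

Definition fold_config (C : config (S + T)%type) : config S :=
  [ffun s => C (inl s) + \sum_u C (inr u) * w u s].

Lemma fold_lift A : fold_config (lift_config A) = A.
Proof.
by apply/ffunP => s; rewrite !ffunE big1 ?addn0 // => u _; rewrite ffunE.
Qed.

Lemma lift_fold (C : config (S + T)%type) :
  (forall u, C (inr u) = 0) -> lift_config (fold_config C) = C.
Proof.
move=> C_inr0; apply/ffunP => -[s|u]; rewrite !ffunE ?C_inr0 //.
by rewrite big1 ?addn0 // => u _; rewrite C_inr0.
Qed.

Lemma fold_config_inl (C : config (S + T)%type) s :
  (forall u, w u s = 0) -> fold_config C s = C (inl s).
Proof. by move=> w0; rewrite ffunE big1 ?addn0 // => u _; rewrite w0 muln0. Qed.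

Lemma lift_step A B :
  step rs A B -> step unfold_reactions (lift_config A) (lift_config B).
Proof.
case=> r [r_rs [r_app ->]]; exists (lift_reaction r); split.
  by rewrite mem_cat map_f.
split; first by case=> [s|u]; rewrite !ffunE.
by apply/ffunP => -[s|u]; rewrite !ffunE.
Qed.

Lemma lift_reachable A B :
  reachable rs A B -> reachable unfold_reactions (lift_config A) (lift_config B).
Proof. by apply: reachable_homo => C D /lift_step/step_reachable. Qed.

Lemma fold_apply_lift r C : applicable (lift_reaction r) C ->
  fold_config (apply_reaction (lift_reaction r) C) = apply_reaction r (fold_config C).
Proof.
move=> r_app; apply/ffunP => s; rewrite !ffunE.
under eq_bigr => u _ do rewrite !ffunE subn0 addn0.
have := r_app (inl s); rewrite ffunE => r_le.
by rewrite -addnBAC // addnAC.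
Qed.

Lemma fold_apply_unfold u C : applicable (unfold_reaction u) C ->
  fold_config (apply_reaction (unfold_reaction u) C) = fold_config C.
Proof.
move=> u_app; apply/ffunP => s; rewrite !ffunE subn0 -addnA; congr (_ + _).
under eq_bigr => v _ do rewrite !ffunE addn0 mulnBl (inj_eq inr_inj).
rewrite sumnB => [|v _]; last first.
  by rewrite leq_mul //; have := u_app (inr v); rewrite ffunE (inj_eq inr_inj).
have -> : \sum_v (v == u) * w v s = w u s.
  by rewrite (bigD1 u) //= eqxx mul1n big1 ?addn0 // => v /negbTE ->.
rewrite subnKC //.
have := u_app (inr u); rewrite ffunE eqxx => C_u.
by rewrite (bigD1 u) //= (leq_trans _ (leq_addr _ _)) // leq_pmull.
Qed.

Lemma fold_step C D :
  step unfold_reactions C D -> reachable rs (fold_config C) (fold_config D).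
Proof.
case=> r [+ [+ ->]]; rewrite mem_cat => /orP[] /mapP[r0 r0_in ->] r_app.
  rewrite fold_apply_lift //; apply: step_reachable; exists r0; split=> //; split=> //.
  move=> s; have := r_app (inl s); rewrite !ffunE => /leq_trans; apply.
  exact: leq_addr.
by rewrite fold_apply_unfold //; apply: reach_refl.
Qed.

Lemma fold_reachable C D :
  reachable unfold_reactions C D -> reachable rs (fold_config C) (fold_config D).
Proof. by apply: reachable_homo; apply: fold_step. Qed.

Lemma unfold_reachable C :
  exists2 C', reachable unfold_reactions C C' & forall u, C' (inr u) = 0.
Proof.
have [n] := ubnP (\sum_u C (inr u)); elim: n C => // n IH C.
have [/forallP C_inr0 _|] := boolP [forall u, C (inr u) == 0].
  by exists C; [apply: reach_refl | move=> u; apply/eqP].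
rewrite negb_forall => /existsP[u]; rewrite -lt0n => C_u lt_n.
set D := apply_reaction (unfold_reaction u) C.
have u_step : step unfold_reactions C D.
  exists (unfold_reaction u); split; first by rewrite mem_cat map_f ?orbT ?mem_enum.
  by split=> // -[s|v]; rewrite ffunE //=; case: eqP => [[->]|].
have D_inr v : D (inr v) = C (inr v) - (v == u).
  by rewrite !ffunE (inj_eq inr_inj) addn0.
have D_lt : \sum_v D (inr v) < \sum_v C (inr v).
  rewrite (bigD1 u) // [X in _ < X](bigD1 u) //= -addSn leq_add //.
    by rewrite D_inr eqxx subn1 ltn_predL.
  by apply: leq_sum => v _; rewrite D_inr leq_subr.
have [C' DC' C'_inr0] := IH D (leq_trans D_lt lt_n).
by exists C' => //; apply: reach_step u_step DC'.
Qed.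

Lemma unfold_reactions_oblivious y :
    (forall r, r \in rs -> r.1 y = 0) ->
  forall r, r \in unfold_reactions -> r.1 (inl y) = 0.
Proof.
move=> rs_obl r; rewrite mem_cat => /orP[] /mapP[r0 r0_in ->]; rewrite ffunE //.
exact: rs_obl.
Qed.

End Unfolding.

Section FixInput.
Variables (d : nat) (N : CRN d) (i : 'I_d) (j : nat).

Definition fix_input_unfold (u : option 'I_d) : config (species N) :=
  [ffun s => match u with
             | None => (s == leaderL N) + j * (s == inX N i)
             | Some k => (k != i) * (inX N k == s)
             end].

Definition fix_input_crn : CRN d := {|
  species := (species N + option 'I_d)%type;
  reactions := unfold_reactions (reactions N) fix_input_unfold;
  inX := fun k => inr (Some k);
  outY := inl (outY N);
  leaderL := inr None;
  inX_inj := inj_comp inr_inj (@Some_inj _);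
  Y_notin_X := fun k => ltac:(by []);
  L_notin_X := fun k => ltac:(by []);
  Y_neq_L := ltac:(by [])
|}.

Lemma fix_input_unfold_outY u : fix_input_unfold u (outY N) = 0.
Proof.
have XY k : (inX N k == outY N) = false by apply/eqP/Y_notin_X.
have YL : (outY N == leaderL N) = false by apply/eqP/Y_neq_L.
by rewrite ffunE; case: u => [k|]; rewrite ?XY ?muln0 // YL eq_sym XY muln0.
Qed.

Lemma fold_init x :
  fold_config fix_input_unfold (init_config fix_input_crn x) =
  init_config N (fun k => if k == i then j else x k).
Proof.
apply/ffunP => s; rewrite !ffunE /= big_pred0 // add0n big_option !ffunE /=.
rewrite big_pred0 // add0n mul1n [in RHS]big_mkcond /=.
have init_X k : (init_config fix_input_crn x : config (species N + option 'I_d)%type)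
                  (inr (Some k)) = x k.
  by rewrite ffunE addn0 (big_pred1 k).
under eq_bigr => k _ do rewrite init_X.
rewrite (bigD1 i) // [X in _ = X + _](bigD1 i) //= !ffunE eqxx muln0 add0n.
set X_s := fun k => if inX N k == s then x k else 0.
rewrite (eq_bigr X_s) => [|k /negbTE k_i].
  rewrite [X in _ = _ + X + _](eq_bigr X_s) => [|k /negbTE ->] //.
  rewrite [s == inX N i]eq_sym.
  by case: (inX N i == s); rewrite ?muln1 ?muln0 ?addn0 ?add0n [RHS]addnC ?addnA.
by rewrite /X_s /fix_input_unfold ffunE k_i; case: (inX N k == s); rewrite ?muln1 ?muln0.
Qed.

Lemma fix_input_crn_oblivious : output_oblivious N -> output_oblivious fix_input_crn.
Proof. exact: unfold_reactions_oblivious. Qed.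

Lemma fix_input_crn_computes f :
  stably_computes N f -> stably_computes fix_input_crn (fix_input f i j).
Proof.
move=> N_f x C init_C.
have [C' CC' C'_inr0] := unfold_reachable (reactions N) fix_input_unfold C.
have := fold_reachable (reachable_trans init_C CC').
rewrite fold_init => /N_f[O [C'O [O_stable O_Y]]].
exists (lift_config _ O); split.
  apply: reachable_trans CC' _; rewrite -(lift_fold fix_input_unfold C'_inr0).
  exact: lift_reachable.
split; last by rewrite /= ffunE.
move=> D /fold_reachable; rewrite fold_lift /= [RHS]ffunE => /O_stable <-.
exact/esym/fold_config_inl/fix_input_unfold_outY.
Qed.

End FixInput.

Theorem mainTheorem12 (d : nat) (f : ('I_d -> nat) -> nat) :
  obliviously_computable f ->
  forall (i : 'I_d) (j : nat), obliviously_computable (fix_input f i j).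
Proof.
move=> [N [N_obl N_f]] i j; exists (fix_input_crn N i j).
by split; [exact: fix_input_crn_oblivious | exact: fix_input_crn_computes].
Qed.
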